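(* Let $H\in(\tfrac12,1)$. For each integer $n>1$ there exists a unique $x_n\in(0,n-1)$ such that the function $g_n(x)=x^{\frac12-H}\phi_n^H(x)$ is strictly decreasing on $(0,x_n)$ and strictly increasing on $(x_n,n-1)$. Moreover $\lim_{n\to\infty}\frac{x_n}{n-1}=H-\frac12$.
   Context: $\phi_n^H(x)=(n-x)^{H-\frac12}-(n-1-x)^{H-\frac12}$ for $x\in(0,n-1)$; $g_n:(0,n-1)\to(0,\infty)$. *)

From Stdlib Require Import Reals.
From Coquelicot Require Import Coquelicot.
Open Scope R_scope.

Definition phi (H : R) (n : nat) (x : R) : R :=
  Rpower (INR n - x) (H - 1/2) - Rpower (INR n - 1 - x) (H - 1/2).

Definition g (H : R) (n : nat) (x : R) : R :=
  Rpower x (1/2 - H) * phi H n x.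

Definition strict_decr_on (f : R -> R) (a b : R) : Prop :=
  forall u v, a < u -> u < v -> v < b -> f v < f u.

Definition strict_incr_on (f : R -> R) (a b : R) : Prop :=
  forall u v, a < u -> u < v -> v < b -> f u < f v.

Definition turning_point (H : R) (n : nat) (x : R) : Prop :=
  0 < x /\ x < INR n - 1 /\
  strict_decr_on (g H n) 0 x /\ strict_incr_on (g H n) x (INR n - 1).

From Stdlib Require Import Reals Lra Lia ClassicalEpsilon Ranalysis5.
From Coquelicot Require Import Coquelicot.
Open Scope R_scope.

(* Write a = H - 1/2, so 0 < a < 1, and N = n.  Then g_n'(x) = a x^(-a-1) crit(x) with
   crit(x) = x((N-1-x)^(a-1) - (N-x)^(a-1)) - ((N-x)^a - (N-1-x)^a),
   and crit' > 0, crit(0) < 0 while crit > 0 close to N - 1: the unique zero x_n of crit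
   is the turning point.  By the mean value theorem crit(x) = x(1-a)c^(a-2) - a c'^(a-1)
   for some c, c' in (N-1-x, N-x); this gives crit(t(N-1)) < 0 for t < a and
   crit(t(N-1)) > 0 for t > a once N is large, hence x_n/(N-1) -> a. *)

Lemma Rpower_gt_0 y p : 0 < Rpower y p.
Proof. apply exp_pos. Qed.

Lemma Rpower_minus_1 y p : 0 < y -> Rpower y (p - 1) = Rpower y p / y.
Proof.
  intros Hy; unfold Rpower.
  replace ((p - 1) * ln y) with (p * ln y + - ln y) by ring.
  rewrite exp_plus, exp_Ropp, exp_ln; auto.
Qed.

Lemma Rpower_lt_base_neg p y z : p < 0 -> 0 < y < z -> Rpower z p < Rpower y p.
Proof.
  intros Hp Hyz; apply exp_increasing.
  assert (ln y < ln z) by (apply ln_increasing; lra); nra.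
Qed.

Lemma Rpower_le_1 p y : p <= 0 -> 1 <= y -> Rpower y p <= 1.
Proof.
  intros Hp Hy; rewrite <- (Rpower_O y) by lra; apply Rle_Rpower; lra.
Qed.

Lemma Rpower_le_inv p s : -1 <= p -> 0 < s <= 1 -> Rpower s p <= / s.
Proof.
  intros Hp Hs.
  replace (Rpower s p) with (Rpower (/ s) (- p))
    by (unfold Rpower; rewrite ln_Rinv by lra; f_equal; ring).
  rewrite <- (Rpower_1 (/ s)) at 2 by (apply Rinv_0_lt_compat; lra).
  apply Rle_Rpower; [|lra].
  rewrite <- Rinv_1; apply Rinv_le_contravar; lra.
Qed.

Lemma Rpower_succ_sub p s : 0 < s ->
  exists c, s < c < s + 1 /\ Rpower (s + 1) p - Rpower s p = p * Rpower c (p - 1).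
Proof.
  intros Hs.
  destruct (MVT_cor2 (fun y => Rpower y p) (fun y => p * Rpower y (p - 1)) s (s + 1))
    as [c [E Hc]]; [lra| |].
  - intros c Hc; apply derivable_pt_lim_power; lra.
  - exists c; split; [lra|]; rewrite E; ring.
Qed.

Lemma derivable_pt_lim_Rpower_sub c p x : x < c ->
  derivable_pt_lim (fun x => Rpower (c - x) p) x (- p * Rpower (c - x) (p - 1)).
Proof.
  intros Hx.
  replace (- p * Rpower (c - x) (p - 1)) with (p * Rpower (c - x) (p - 1) * (0 - 1)) by ring.
  apply (derivable_pt_lim_comp (fun x => c - x) (fun y => Rpower y p)).
  - apply derivable_pt_lim_minus; [apply derivable_pt_lim_const | apply derivable_pt_lim_id].
  - apply derivable_pt_lim_power; lra.
Qed.

Lemma deriv_pos_incr f f' u v : u < v ->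
  (forall x, u <= x <= v -> derivable_pt_lim f x (f' x)) ->
  (forall x, u < x < v -> 0 < f' x) -> f u < f v.
Proof.
  intros Huv Hd Hpos.
  destruct (MVT_cor2 f f' u v Huv Hd) as [c [E Hc]].
  specialize (Hpos c Hc); nra.
Qed.

Lemma deriv_neg_decr f f' u v : u < v ->
  (forall x, u <= x <= v -> derivable_pt_lim f x (f' x)) ->
  (forall x, u < x < v -> f' x < 0) -> f v < f u.
Proof.
  intros Huv Hd Hneg.
  destruct (MVT_cor2 f f' u v Huv Hd) as [c [E Hc]].
  specialize (Hneg c Hc); nra.
Qed.

Lemma strict_decr_incr_unique f lo hi y z :
  lo < y -> y < hi -> lo < z -> z < hi ->
  strict_decr_on f lo y -> strict_incr_on f y hi ->
  strict_decr_on f lo z -> strict_incr_on f z hi -> y = z.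
Proof.
  intros Hy1 Hy2 Hz1 Hz2 Dy Iy Dz Iz.
  destruct (Rtotal_order y z) as [h|[h|h]]; [|exact h|].
  - specialize (Dz (y + (z - y) / 3) (y + 2 * (z - y) / 3)).
    specialize (Iy (y + (z - y) / 3) (y + 2 * (z - y) / 3)). lra.
  - specialize (Dy (z + (y - z) / 3) (z + 2 * (y - z) / 3)).
    specialize (Iz (z + (y - z) / 3) (z + 2 * (y - z) / 3)). lra.
Qed.

Lemma eventually_INR_ge C : eventually (fun n => (1 < n)%nat /\ C <= INR n).
Proof.
  destruct (INR_unbounded C) as [n0 Hn0].
  exists (Nat.max 2 n0); intros n Hn; split; [lia|].
  assert (INR n0 <= INR n) by (apply le_INR; lia); lra.
Qed.

Lemma is_lim_seq_of_eventually_bounds (u : nat -> R) (l : R) :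
  (forall eps, 0 < eps -> eventually (fun n => l - eps < u n)) ->
  (forall eps, 0 < eps -> eventually (fun n => u n < l + eps)) ->
  is_lim_seq u l.
Proof.
  intros Hlo Hhi; apply is_lim_seq_spec; intros [eps Heps]; simpl.
  apply (filter_imp (fun n => l - eps < u n /\ u n < l + eps)).
  - intros n Hn; apply Rabs_def1; lra.
  - apply filter_and; auto.
Qed.
Section TurningPoint.

Variable a : R.
Hypothesis Ha : 0 < a < 1.

Definition gr (N x : R) : R :=
  Rpower x (- a) * (Rpower (N - x) a - Rpower (N - 1 - x) a).

Definition crit (N x : R) : R :=
  x * (Rpower (N - 1 - x) (a - 1) - Rpower (N - x) (a - 1))
  - (Rpower (N - x) a - Rpower (N - 1 - x) a).

Definition crit' (N x : R) : R :=
  (1 - a) * ((Rpower (N - 1 - x) (a - 1) - Rpower (N - x) (a - 1))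
             + x * (Rpower (N - 1 - x) (a - 1 - 1) - Rpower (N - x) (a - 1 - 1))).

Lemma gr_derive N x : 0 < x -> x < N - 1 ->
  derivable_pt_lim (gr N) x (a * Rpower x (- a) / x * crit N x).
Proof.
  intros Hx0 Hx; unfold gr.
  assert (P := derivable_pt_lim_power x (- a) Hx0).
  assert (D0 := derivable_pt_lim_Rpower_sub N a x ltac:(lra)).
  assert (D1 := derivable_pt_lim_Rpower_sub (N - 1) a x Hx).
  eapply (eq_rect _ (derivable_pt_lim _ x)).
  - apply (derivable_pt_lim_mult _ _ _ _ _ P (derivable_pt_lim_minus _ _ _ _ _ D0 D1)).
  - rewrite Rpower_minus_1 by lra; unfold crit, minus_fct; field; lra.
Qed.

Lemma crit_derive N x : x < N - 1 -> derivable_pt_lim (crit N) x (crit' N x).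
Proof.
  intros Hx; unfold crit.
  assert (A1 := derivable_pt_lim_Rpower_sub (N - 1) (a - 1) x Hx).
  assert (B1 := derivable_pt_lim_Rpower_sub N (a - 1) x ltac:(lra)).
  assert (A0 := derivable_pt_lim_Rpower_sub (N - 1) a x Hx).
  assert (B0 := derivable_pt_lim_Rpower_sub N a x ltac:(lra)).
  eapply (eq_rect _ (derivable_pt_lim _ x)).
  - apply derivable_pt_lim_minus; [apply derivable_pt_lim_mult|].
    + apply derivable_pt_lim_id.
    + exact (derivable_pt_lim_minus _ _ _ _ _ A1 B1).
    + exact (derivable_pt_lim_minus _ _ _ _ _ B0 A0).
  - unfold crit', minus_fct; ring.
Qed.

Lemma crit_incr N u v : 0 <= u -> u < v -> v < N - 1 -> crit N u < crit N v.
Proof.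
  intros Hu Huv Hv; apply (deriv_pos_incr _ (crit' N)); [exact Huv| |].
  - intros x Hx; apply crit_derive; lra.
  - intros x Hx; unfold crit'.
    assert (Rpower (N - x) (a - 1) < Rpower (N - 1 - x) (a - 1))
      by (apply Rpower_lt_base_neg; lra).
    assert (Rpower (N - x) (a - 1 - 1) < Rpower (N - 1 - x) (a - 1 - 1))
      by (apply Rpower_lt_base_neg; lra).
    apply Rmult_lt_0_compat; nra.
Qed.

Lemma crit_lt_inv N u v : 0 <= u < N - 1 -> 0 <= v < N - 1 ->
  crit N u < crit N v -> u < v.
Proof.
  intros Hu Hv Hlt.
  destruct (Rtotal_order u v) as [h|[h|h]]; [exact h| subst; lra |].
  assert (crit N v < crit N u) by (apply crit_incr; lra); lra.
Qed.

Lemma crit_0_neg N : 1 < N -> crit N 0 < 0.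
Proof.
  intros HN; unfold crit.
  assert (Rpower (N - 1 - 0) a < Rpower (N - 0) a) by (apply Rlt_Rpower_l; lra); lra.
Qed.

Lemma crit_gt_lower N x : 0 <= x < N - 1 ->
  Rpower (N - 1 - x) (a - 1) * (x - a) - x < crit N x.
Proof.
  intros Hx; set (s := N - 1 - x).
  assert (Hs : 0 < s) by (unfold s; lra).
  destruct (Rpower_succ_sub a s Hs) as [c [Hc E]].
  assert (Rpower (s + 1) (a - 1) <= 1) by (apply Rpower_le_1; lra).
  assert (Rpower c (a - 1) < Rpower s (a - 1)) by (apply Rpower_lt_base_neg; lra).
  unfold crit; fold s; replace (N - x) with (s + 1) by (unfold s; ring).
  rewrite E.
  assert (0 <= x * (1 - Rpower (s + 1) (a - 1))) by (apply Rmult_le_pos; lra).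
  assert (0 < a * (Rpower s (a - 1) - Rpower c (a - 1))) by (apply Rmult_lt_0_compat; lra).
  lra.
Qed.

(* The bound of [crit_gt_lower] beats [x] once [(N - 1 - x)^(a-1)] exceeds
   [K = 2N/(1-a)], which happens for [N - 1 - x = K^(1/(a-1))]. *)
Lemma crit_pos_near_end N : 2 <= N -> exists x, 0 < x < N - 1 /\ 0 < crit N x.
Proof.
  intros HN.
  set (K := 2 * N / (1 - a)).
  assert (HK : K * (1 - a) = 2 * N) by (unfold K; field; lra).
  assert (HK1 : 1 <= K) by nra.
  set (s := Rpower K (/ (a - 1))).
  assert (Hs0 : 0 < s) by apply Rpower_gt_0.
  assert (HsK : Rpower s (a - 1) = K).
  { unfold s; rewrite Rpower_mult.
    replace (/ (a - 1) * (a - 1)) with 1 by (field; lra).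
    apply Rpower_1; lra. }
  assert (Hs1 : s <= 1).
  { apply Rpower_le_1; [|lra].
    apply Rlt_le, Rinv_lt_0_compat; lra. }
  assert (HsinvK : s <= / K).
  { rewrite <- (Rinv_inv s); apply Rinv_le_contravar; [lra|].
    rewrite <- HsK; apply Rpower_le_inv; lra. }
  assert (HsK1 : s * K <= 1).
  { replace 1 with (/ K * K) by (field; lra); apply Rmult_le_compat_r; lra. }
  assert (Hs_small : s <= (1 - a) / 4) by nra.
  exists (N - 1 - s); split; [lra|].
  assert (L := crit_gt_lower N (N - 1 - s) ltac:(lra)).
  replace (N - 1 - (N - 1 - s)) with s in L by ring.
  rewrite HsK in L.
  assert (K * (N - 1 - s - a) >= K * ((1 - a) / 2)) by (apply Rmult_ge_compat_l; lra).
  nra.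
Qed.

Lemma crit_root_exists N : 2 <= N -> exists z, 0 < z < N - 1 /\ crit N z = 0.
Proof.
  intros HN; destruct (crit_pos_near_end N HN) as [x1 [Hx1 Hpos]].
  assert (Hneg := crit_0_neg N ltac:(lra)).
  destruct (IVT_interv (crit N) 0 x1) as [z [Hz Ez]]; [| lra | exact Hneg | exact Hpos |].
  - intros y Hy; apply derivable_continuous_pt; exists (crit' N y); apply crit_derive; lra.
  - exists z; split; [|exact Ez].
    assert (z <> 0) by (intros ->; lra); lra.
Qed.

Lemma gr_turning N z : 0 < z < N - 1 -> crit N z = 0 ->
  strict_decr_on (gr N) 0 z /\ strict_incr_on (gr N) z (N - 1).
Proof.
  intros Hz Ez.
  set (gr' x := a * Rpower x (- a) / x * crit N x).
  assert (Hd : forall x, 0 < x < N - 1 -> derivable_pt_lim (gr N) x (gr' x))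
    by (intros x Hx; apply gr_derive; lra).
  assert (Hfactor : forall x, 0 < x -> 0 < a * Rpower x (- a) / x).
  { intros x Hx; apply Rdiv_lt_0_compat; [apply Rmult_lt_0_compat|]; try lra.
    apply Rpower_gt_0. }
  split; intros u v Hu Huv Hv.
  - apply (deriv_neg_decr _ gr'); [exact Huv | intros x Hx; apply Hd; lra |].
    intros x Hx; unfold gr'.
    assert (crit N x < crit N z) by (apply crit_incr; lra).
    specialize (Hfactor x ltac:(lra)); nra.
  - apply (deriv_pos_incr _ gr'); [exact Huv | intros x Hx; apply Hd; lra |].
    intros x Hx; unfold gr'.
    assert (crit N z < crit N x) by (apply crit_incr; lra).
    specialize (Hfactor x ltac:(lra)); nra.
Qed.

Lemma crit_mvt N x : x < N - 1 ->
  exists c c', N - 1 - x < c < N - x /\ N - 1 - x < c' < N - x /\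
    crit N x = x * (1 - a) * Rpower c (a - 1 - 1) - a * Rpower c' (a - 1).
Proof.
  intros Hx; set (s := N - 1 - x).
  destruct (Rpower_succ_sub (a - 1) s ltac:(unfold s; lra)) as [c [Hc Ec]].
  destruct (Rpower_succ_sub a s ltac:(unfold s; lra)) as [c' [Hc' Ec']].
  replace (s + 1) with (N - x) in * by (unfold s; ring).
  exists c, c'; split; [exact Hc|]; split; [exact Hc'|].
  unfold crit; fold s; rewrite Ec'.
  replace (Rpower s (a - 1) - Rpower (N - x) (a - 1)) with (- ((a - 1) * Rpower c (a - 1 - 1)))
    by lra.
  ring.
Qed.

Lemma crit_neg_of N x : 0 < x < N - 1 ->
  x * (1 - a) * (N - x) <= a * ((N - 1 - x) * (N - 1 - x)) -> crit N x < 0.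
Proof.
  intros Hx Hcond.
  destruct (crit_mvt N x ltac:(lra)) as [c [c' [Hc [Hc' ->]]]].
  set (s := N - 1 - x) in *.
  assert (Hs : 0 < s) by (unfold s; lra).
  replace (N - x) with (s + 1) in * by (unfold s; ring).
  set (P := Rpower s a).
  assert (Es : Rpower s (a - 1 - 1) = P / (s * s))
    by (unfold P; rewrite !Rpower_minus_1 by lra; field; lra).
  assert (Bc : Rpower c (a - 1 - 1) < P / (s * s))
    by (rewrite <- Es; apply Rpower_lt_base_neg; lra).
  assert (Bc' : P / (s + 1) < Rpower c' (a - 1)).
  { apply (Rlt_trans _ (Rpower (s + 1) (a - 1))).
    - rewrite Rpower_minus_1 by lra; apply Rmult_lt_compat_r.
      + apply Rinv_0_lt_compat; lra.
      + apply Rlt_Rpower_l; lra.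
    - apply Rpower_lt_base_neg; lra. }
  assert (x * (1 - a) * Rpower c (a - 1 - 1) < x * (1 - a) * (P / (s * s)))
    by (apply Rmult_lt_compat_l; nra).
  assert (a * (P / (s + 1)) < a * Rpower c' (a - 1)) by (apply Rmult_lt_compat_l; lra).
  assert (x * (1 - a) * (P / (s * s)) - a * (P / (s + 1))
          = (x * (1 - a) * (s + 1) - a * (s * s)) * (P / (s * s * (s + 1))))
    by (field; lra).
  assert (0 < P / (s * s * (s + 1))) by (apply Rdiv_lt_0_compat; [apply Rpower_gt_0 | nra]).
  nra.
Qed.

Lemma crit_pos_of N x : 0 < x < N - 1 ->
  a * ((N - x) * (N - x)) <= x * (1 - a) * (N - 1 - x) -> 0 < crit N x.
Proof.
  intros Hx Hcond.
  destruct (crit_mvt N x ltac:(lra)) as [c [c' [Hc [Hc' ->]]]].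
  set (s := N - 1 - x) in *.
  assert (Hs : 0 < s) by (unfold s; lra).
  replace (N - x) with (s + 1) in * by (unfold s; ring).
  set (P := Rpower s a).
  assert (Bc : P / ((s + 1) * (s + 1)) < Rpower c (a - 1 - 1)).
  { apply (Rlt_trans _ (Rpower (s + 1) (a - 1 - 1))).
    - rewrite !Rpower_minus_1 by lra.
      replace (Rpower (s + 1) a / (s + 1) / (s + 1))
        with (Rpower (s + 1) a / ((s + 1) * (s + 1))) by (field; lra).
      apply Rmult_lt_compat_r.
      + apply Rinv_0_lt_compat; nra.
      + apply Rlt_Rpower_l; lra.
    - apply Rpower_lt_base_neg; lra. }
  assert (Bc' : Rpower c' (a - 1) < P / s).
  { unfold P; rewrite <- Rpower_minus_1 by lra; apply Rpower_lt_base_neg; lra. }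
  assert (x * (1 - a) * (P / ((s + 1) * (s + 1))) < x * (1 - a) * Rpower c (a - 1 - 1))
    by (apply Rmult_lt_compat_l; nra).
  assert (a * Rpower c' (a - 1) < a * (P / s)) by (apply Rmult_lt_compat_l; lra).
  assert (x * (1 - a) * (P / ((s + 1) * (s + 1))) - a * (P / s)
          = (x * (1 - a) * s - a * ((s + 1) * (s + 1))) * (P / (s * (s + 1) * (s + 1))))
    by (field; lra).
  assert (0 < P / (s * (s + 1) * (s + 1))) by (apply Rdiv_lt_0_compat; [apply Rpower_gt_0 | nra]).
  nra.
Qed.

Lemma crit_root_ratio_gt t : t < a ->
  exists C, forall N z, C <= N -> 0 < z < N - 1 -> crit N z = 0 -> t < z / (N - 1).
Proof.
  intros Ht; destruct (Rle_or_lt t 0) as [Ht0|Ht0].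
  - exists 2; intros N z HN Hz _.
    apply (Rle_lt_trans _ 0); [lra | apply Rdiv_lt_0_compat; lra].
  - set (k := (1 - t) * (a - t)).
    assert (Hk : 0 < k) by (unfold k; nra).
    exists (2 + t * (1 - a) / k); intros N z HN Hz Ez.
    set (m := N - 1) in *.
    assert (Hm1 : 1 <= m).
    { assert (0 < t * (1 - a) / k) by (apply Rdiv_lt_0_compat; nra); unfold m; lra. }
    assert (Hm : t * (1 - a) <= k * m).
    { replace (t * (1 - a)) with (k * (t * (1 - a) / k)) by (field; lra).
      apply Rmult_le_compat_l; unfold m; lra. }
    assert (Hneg : crit N (t * m) < 0).
    { apply crit_neg_of; [fold m; split; nra|].
      replace (N - t * m) with ((1 - t) * m + 1) by (unfold m; ring).
      replace (N - 1 - t * m) with ((1 - t) * m) by (unfold m; ring).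
      assert (0 <= m * (k * m - t * (1 - a))) by (apply Rmult_le_pos; lra).
      unfold k in *; nra. }
    apply Rlt_div_r; [lra|].
    apply (crit_lt_inv N); fold m; [split; nra | lra | lra].
Qed.

Lemma crit_root_ratio_lt t : a < t ->
  exists C, forall N z, C <= N -> 0 < z < N - 1 -> crit N z = 0 -> z / (N - 1) < t.
Proof.
  intros Ht; destruct (Rle_or_lt 1 t) as [Ht1|Ht1].
  - exists 2; intros N z HN Hz _.
    apply (Rlt_le_trans _ 1); [apply Rlt_div_l; lra | lra].
  - set (k := (1 - t) * (t - a)).
    assert (Hk : 0 < k) by (unfold k; nra).
    exists (2 + 3 * a / k); intros N z HN Hz Ez.
    set (m := N - 1) in *.
    assert (Hm1 : 1 <= m).
    { assert (0 < 3 * a / k) by (apply Rdiv_lt_0_compat; lra); unfold m; lra. }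
    assert (Hm : 3 * a <= k * m).
    { replace (3 * a) with (k * (3 * a / k)) by (field; lra).
      apply Rmult_le_compat_l; unfold m; lra. }
    assert (Hpos : 0 < crit N (t * m)).
    { apply crit_pos_of; [fold m; split; nra|].
      replace (N - t * m) with ((1 - t) * m + 1) by (unfold m; ring).
      replace (N - 1 - t * m) with ((1 - t) * m) by (unfold m; ring).
      assert (3 * a * m <= k * m * m) by (apply Rmult_le_compat_r; lra).
      assert (0 <= a * t * m) by (repeat apply Rmult_le_pos; lra).
      unfold k in *; nra. }
    apply Rlt_div_l; [lra|].
    apply (crit_lt_inv N); fold m; [lra | split; nra | lra].
Qed.

End TurningPoint.

Lemma g_gr H n x : g H n x = gr (H - 1/2) (INR n) x.
Proof. unfold g, phi, gr; do 2 f_equal; ring. Qed.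

Theorem lemmaA1 (H : R) (hH : 1/2 < H < 1) :
  exists xs : nat -> R,
    (forall n : nat, (1 < n)%nat ->
       turning_point H n (xs n) /\
       (forall y : R, turning_point H n y -> y = xs n)) /\
    is_lim_seq (fun n : nat => xs n / (INR n - 1)) (H - 1/2).
Proof.
  set (a := H - 1/2); assert (Ha : 0 < a < 1) by (unfold a; lra).
  destruct (choice (fun n z => (1 < n)%nat -> 0 < z < INR n - 1 /\ crit a (INR n) z = 0))
    as [xs Hxs].
  { intros n; destruct (Nat.lt_ge_cases 1 n) as [hn|hn].
    - assert (2 <= INR n) by (change 2 with (INR 2); apply le_INR; lia).
      destruct (crit_root_exists a Ha (INR n)) as [z Hz]; [lra|].
      exists z; intros _; exact Hz.
    - exists 0; intros; lia. }
  assert (Htp : forall n, (1 < n)%nat -> turning_point H n (xs n)).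
  { intros n hn; destruct (Hxs n hn) as [Hz Ez].
    destruct (gr_turning a Ha (INR n) (xs n) Hz Ez) as [Hdecr Hincr].
    repeat split; try lra; intros u v Hu Huv Hv; rewrite !g_gr; auto. }
  exists xs; split.
  - intros n hn; split; [now apply Htp|].
    intros y Hy; destruct Hy as (Hy0 & Hy1 & Hydecr & Hyincr).
    destruct (Htp n hn) as (Hx0 & Hx1 & Hxdecr & Hxincr).
    exact (strict_decr_incr_unique _ 0 (INR n - 1) y (xs n) Hy0 Hy1 Hx0 Hx1
             Hydecr Hyincr Hxdecr Hxincr).
  - apply is_lim_seq_of_eventually_bounds; intros eps Heps.
    + destruct (crit_root_ratio_gt a Ha (a - eps)) as [C HC]; [lra|].
      apply (filter_imp _ _ (fun n '(conj hn HCn) => HC _ _ HCn (proj1 (Hxs n hn))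
        (proj2 (Hxs n hn))) (eventually_INR_ge C)).
    + destruct (crit_root_ratio_lt a Ha (a + eps)) as [C HC]; [lra|].
      apply (filter_imp _ _ (fun n '(conj hn HCn) => HC _ _ HCn (proj1 (Hxs n hn))
        (proj2 (Hxs n hn))) (eventually_INR_ge C)).
Qed.
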